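(* Let $G$ be a trigraph containing a fence gadget $F$ attached to a set $S$ and satisfying the attachment rule in $G$ with set $X$, and let $Y=V(G)\setminus(V(F)\cup S\cup X)$. Let $G'$ be any trigraph of a partial $4$-sequence from $G$ such that $S$ is not contained in a single part of $G'$. Then (i) no part of $G'$ intersects both $S$ and $V(G)\setminus S$, and (ii) no part of $G'$ intersects both $X$ and $Y$.
   Context: A trigraph $G$ consists of a vertex set $V(G)$ and two disjoint sets of unordered pairs of distinct vertices: black edges and red edges; the red graph is formed by the red edges. Contracting two distinct vertices $u,v$ replaces them by a new vertex $w$ such that, for every other vertex $z$, $wz$ is black if $uz,vz$ are both black, a non-edge if both are non-edges, and red otherwise. A partial $d$-sequence from $G$ is a sequence of trigraphs starting at $G$, each obtained from the previous by one contraction, all of maximum red degree at most $d$. Each vertex $u$ of a later trigraph $G'$ corresponds to the set $u(G)$ of vertices of $G$ merged into it; these sets are the parts of $G'$. A fence gadget is a trigraph $F$ on $A\cup B$, $A=\{a_1,\dots,a_6\}$, $B=\{b_1,\dots,b_6\}$, whose black edges are those of the cycles $a_1a_2a_3a_4a_5a_6a_1$ and $b_1b_2b_3b_4b_5b_6b_1$ together with $b_1a_6$, and whose red edges are $a_ib_i$ for $i\in[6]$ and $a_ib_{i+1}$ for $i\in[5]$. Inside a trigraph $G$, $F$ is attached to a nonempty set $S\subseteq V(G)\setminus V(F)$ if every vertex of $A$ is joined by a black edge to every vertex of $S$ and no vertex of $B$ is adjacent to a vertex of $S$. $F$ satisfies the attachment rule in $G$ if $V(F)$ is the vertex set of a connected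 component of the red graph of $G$ and there is a set $X\subseteq V(G)\setminus(V(F)\cup S)$ such that every vertex of $A$ has exactly $X\cup S$ as its set of neighbours outside $V(F)$, every vertex of $B$ has exactly $X$ as its set of neighbours outside $V(F)$ (all these edges black), and every vertex of $X$ is adjacent to every vertex of $S$. *)

From mathcomp Require Import all_boot.
Set Implicit Arguments. Unset Strict Implicit. Unset Printing Implicit Defensive.

(* A trigraph whose vertices are labelled by elements of a finite type V.
   Only pairs of distinct vertices of [tverts] carry meaningful edge data. *)
Record trigraph (V : finType) := Trigraph {
  tverts : {set V};
  tblack : rel V;
  tred   : rel V }.

Section Trigraphs.
Variable T : finType.

Definition wf_trigraph (bl rd : rel T) : Prop :=
  [/\ symmetric bl, symmetric rd, irreflexive bl, irreflexive rd &
      forall x y, ~~ (bl x y && rd x y)].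

(* During a contraction sequence the vertices of the current trigraph are
   labelled by their parts, i.e. the sets of original vertices merged into
   them.  The initial trigraph has singleton parts. *)
Definition init_trigraph (bl rd : rel T) : trigraph {set T} :=
  Trigraph [set [set x] | x : T]
    (fun A B => [exists x, exists y, [&& A == [set x], B == [set y] & bl x y]])
    (fun A B => [exists x, exists y, [&& A == [set x], B == [set y] & rd x y]]).

Definition contract (H : trigraph {set T}) (u v : {set T})
  : trigraph {set T} :=
  let w := u :|: v in
  let V' := w |: ((tverts H :\ u) :\ v) in
  let adj a b := tblack H a b || tred H a b in
  Trigraph V'
    (fun a b => [&& a \in V', b \in V', a != b &
       if a == w then tblack H u b && tblack H v b
       else if b == w then tblack H a u && tblack H a v
       else tblack H a b])
    (fun a b => [&& a \in V', b \in V', a != b &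
       if a == w then ~~ (tblack H u b && tblack H v b) && (adj u b || adj v b)
       else if b == w then ~~ (tblack H a u && tblack H a v) && (adj a u || adj a v)
       else tred H a b]).

Definition maxred_le (d : nat) (H : trigraph {set T}) : Prop :=
  forall a, a \in tverts H -> #|[set b in tverts H | tred H a b]| <= d.

Inductive in_partial_seq (d : nat) (G0 : trigraph {set T})
  : trigraph {set T} -> Prop :=
| ps_start : maxred_le d G0 -> in_partial_seq d G0 G0
| ps_step H u v : in_partial_seq d G0 H -> u \in tverts H -> v \in tverts H ->
    u != v -> maxred_le d (contract H u v) ->
    in_partial_seq d G0 (contract H u v).

(* Fence gadget on A + B with a_i = inl (i-1), b_i = inr (i-1). *)
Definition fence_black (p q : 'I_6 + 'I_6) : bool :=
  match p, q with
  | inl i, inl j | inr i, inr j =>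
      (val j == (val i).+1 %% 6) || (val i == (val j).+1 %% 6)
  | inr i, inl j => (val i == 0) && (val j == 5)
  | inl j, inr i => (val i == 0) && (val j == 5)
  end.

Definition fence_red (p q : 'I_6 + 'I_6) : bool :=
  match p, q with
  | inl i, inr j | inr j, inl i => (val j == val i) || (val j == (val i).+1)
  | _, _ => false
  end.

Definition contains_fence (bl rd : rel T) (f : 'I_6 + 'I_6 -> T) : Prop :=
  injective f /\
  forall p q, bl (f p) (f q) = fence_black p q /\ rd (f p) (f q) = fence_red p q.

Definition fenceV (f : 'I_6 + 'I_6 -> T) : {set T} := [set f p | p in predT].
Definition fenceA (f : 'I_6 + 'I_6 -> T) : {set T} := [set f (inl i) | i in predT].
Definition fenceB (f : 'I_6 + 'I_6 -> T) : {set T} := [set f (inr i) | i in predT].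

Definition adjacent (bl rd : rel T) x y := bl x y || rd x y.

Definition attached (bl rd : rel T) (f : 'I_6 + 'I_6 -> T) (S : {set T}) : Prop :=
  [/\ S != set0, [disjoint S & fenceV f],
      forall a s, a \in fenceA f -> s \in S -> bl a s &
      forall b s, b \in fenceB f -> s \in S -> ~~ adjacent bl rd b s].

Definition attachment_rule (bl rd : rel T) (f : 'I_6 + 'I_6 -> T)
    (S X : {set T}) : Prop :=
  [/\ exists2 x, x \in fenceV f & fenceV f = [set y | connect rd x y],
      [disjoint X & fenceV f :|: S],
      forall a z, a \in fenceA f -> z \notin fenceV f ->
        adjacent bl rd a z = (z \in X :|: S) /\ (z \in X :|: S -> bl a z),
      forall b z, b \in fenceB f -> z \notin fenceV f ->
        adjacent bl rd b z = (z \in X) /\ (z \in X -> bl b z) &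
      forall x s, x \in X -> s \in S -> adjacent bl rd x s].

End Trigraphs.

From mathcomp Require Import all_boot.
Set Implicit Arguments. Unset Strict Implicit. Unset Printing Implicit Defensive.

(* Each trigraph of the sequence is the quotient of G by its partition into
   parts: two parts are joined black when all pairs across are black, and red
   when they are adjacent but not all black.  A vertex outside a part having
   both a non-black and an adjacent partner in it is "mixed" to the part, and
   mixed vertices lying in distinct parts give distinct red neighbours.  If
   fence vertices lie in distinct parts, a part meeting S and its complement,
   or X and Y, has at least five fence vertices mixed to it; a merged part
   containing two fence vertices has five mixed vertices among the other fence
   vertices and two S-vertices in distinct parts (they exist as S is not
   inside a part).  These counts are a finite check on the gadget.  So red
   degree at most 4 keeps the fence vertices in distinct parts throughout the
   sequence, and this forces (i) and (ii). *)

Definition inA (p : 'I_6 + 'I_6) := if p is inl _ then true else false.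

Definition fence_adj p q := fence_black p q || fence_red p q.

Definition mixed_to_pair p q r :=
  [&& r != p, r != q, ~~ fence_black p r || ~~ fence_black q r &
      fence_adj p r || fence_adj q r].

Definition mixed_to_S p r :=
  [&& r != p, ~~ fence_black p r || ~~ inA r & fence_adj p r || inA r].

(* The canonical enumeration of ['I_6 + 'I_6] is locked, so counts over it do
   not compute; this explicit one does. *)
Definition fence_vertices : seq ('I_6 + 'I_6) :=
  let I6 := [:: @Ordinal 6 0 isT; @Ordinal 6 1 isT; @Ordinal 6 2 isT;
                @Ordinal 6 3 isT; @Ordinal 6 4 isT; @Ordinal 6 5 isT] in
  [seq inl i | i <- I6] ++ [seq inr i | i <- I6].

Lemma mem_fence_vertices r : r \in fence_vertices.
Proof. by case: r => -[m lt6]; do 6?[case: m lt6 => [|m] lt6 //]. Qed.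

Lemma card_fence (P : pred ('I_6 + 'I_6)) : #|P| = count P fence_vertices.
Proof.
rewrite cardE /enum_mem size_filter -enumT; apply/permP/uniq_perm.
- exact: enum_uniq.
- by vm_compute.
- by move=> r; rewrite mem_enum mem_fence_vertices.
Qed.

Lemma fence_allP (P : pred ('I_6 + 'I_6)) : all P fence_vertices -> forall r, P r.
Proof. by move=> /allP allP r; apply: allP; exact: mem_fence_vertices. Qed.

Lemma fence_allP2 (P : _ -> pred ('I_6 + 'I_6)) :
  all (fun p => all (P p) fence_vertices) fence_vertices -> forall p q, P p q.
Proof. by move=> /fence_allP allP p; apply/fence_allP/allP. Qed.

Lemma card_mixed_to_pair p q :
  p != q -> 5 <= #|[set r | mixed_to_pair p q r]| + (inA p != inA q).*2.
Proof.
rewrite cardsE card_fence; apply/implyP; move: p q.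
by apply: fence_allP2; vm_compute.
Qed.

Lemma card_mixed_to_S p : 5 <= #|[set r | mixed_to_S p r]|.
Proof. by rewrite cardsE card_fence; move: p; apply: fence_allP; vm_compute. Qed.

Lemma card_fence_side b : #|[set r | inA r == b]| = 6.
Proof. by rewrite cardsE card_fence; case: b; vm_compute. Qed.

Section Parts.
Variable T : finType.
Implicit Types (H : trigraph {set T}) (A B Z : {set T}).

Definition scattered H Z := forall P z1 z2, P \in tverts H ->
  z1 \in P -> z2 \in P -> z1 \in Z -> z2 \in Z -> z1 = z2.

Definition separates H A B := forall P x y, P \in tverts H ->
  x \in P -> y \in P -> x \in A -> y \in B -> False.

Lemma scatteredS H Z1 Z2 : Z1 \subset Z2 -> scattered H Z2 -> scattered H Z1.
Proof.
move=> /subsetP sub scZ P z1 z2 PH z1P z2P /sub z1Z /sub z2Z.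
exact: scZ PH z1P z2P z1Z z2Z.
Qed.

Lemma separatesS H A1 A2 B1 B2 :
  A1 \subset A2 -> B1 \subset B2 -> separates H A2 B2 -> separates H A1 B1.
Proof.
move=> /subsetP subA /subsetP subB sep P x y PH xP yP /subA xA /subB yB.
exact: sep PH xP yP xA yB.
Qed.

Lemma scatteredU H Z1 Z2 :
  scattered H Z1 -> scattered H Z2 -> separates H Z1 Z2 -> scattered H (Z1 :|: Z2).
Proof.
move=> sc1 sc2 sep P z1 z2 PH z1P z2P; rewrite !inE.
case/orP=> [z1Z|z1Z] /orP[z2Z|z2Z].
- exact: sc1 PH z1P z2P z1Z z2Z.
- by case: (sep _ _ _ PH z1P z2P z1Z z2Z).
- by case: (sep _ _ _ PH z2P z1P z2Z z1Z).
- exact: sc2 PH z1P z2P z1Z z2Z.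
Qed.

Lemma separates_sym H A B : separates H A B -> separates H B A.
Proof. by move=> sep P x y PH xP yP xB yA; exact: sep PH yP xP yA xB. Qed.

Lemma scattered_set0 H : scattered H set0.
Proof. by move=> P z1 z2 _ _ _; rewrite inE. Qed.

Lemma mem_contract H u v P :
  (P \in tverts (contract H u v)) =
  (P == u :|: v) || [&& P != v, P != u & P \in tverts H].
Proof. by rewrite !inE. Qed.

Lemma contract_refines H u v P : P \in tverts H ->
  exists2 Q, Q \in tverts (contract H u v) & P \subset Q.
Proof.
move=> PH; case: (eqVneq P u) => [->|Pu].
  by exists (u :|: v); rewrite ?mem_contract ?eqxx ?subsetUl.
case: (eqVneq P v) => [->|Pv].
  by exists (u :|: v); rewrite ?mem_contract ?eqxx ?subsetUr.
by exists P; rewrite // mem_contract Pu Pv PH orbT.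
Qed.

Lemma scattered_contract H u v Z : scattered H Z ->
  (forall z1 z2, z1 \in u :|: v -> z2 \in u :|: v -> z1 \in Z -> z2 \in Z -> z1 = z2) ->
  scattered (contract H u v) Z.
Proof.
move=> scZ scw P z1 z2; rewrite mem_contract => /orP[/eqP->|/and3P[_ _ PH]].
  exact: scw.
exact: scZ.
Qed.

Lemma separates_contract H u v A B : separates H A B ->
  (forall x y, x \in u :|: v -> y \in u :|: v -> x \in A -> y \in B -> False) ->
  separates (contract H u v) A B.
Proof.
move=> sep sepw P x y; rewrite mem_contract => /orP[/eqP->|/and3P[_ _ PH]].
  exact: sepw.
exact: sep.
Qed.

Lemma scattered_merge_split H u v Z z1 z2 : scattered H Z ->
  u \in tverts H -> v \in tverts H -> z1 != z2 -> z1 \in Z -> z2 \in Z ->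
  z1 \in u :|: v -> z2 \in u :|: v ->
  (z1 \in u) && (z2 \in v) || (z1 \in v) && (z2 \in u).
Proof.
move=> scZ uH vH z12 z1Z z2Z; rewrite !inE.
case/orP=> z1P /orP[z2P|z2P]; rewrite ?z1P ?z2P ?orbT //;
  by case/eqP: z12; apply: scZ z1P z2P z1Z z2Z.
Qed.

Lemma scattered_merge_pair H u v Z z1 z2 z : scattered H Z ->
  u \in tverts H -> v \in tverts H -> z1 != z2 -> z1 \in Z -> z2 \in Z -> z \in Z ->
  z1 \in u :|: v -> z2 \in u :|: v -> z \in u :|: v -> z = z1 \/ z = z2.
Proof.
move=> scZ uH vH z12 z1Z z2Z zZ z1w z2w.
have split := scattered_merge_split scZ uH vH z12 z1Z z2Z z1w z2w.
rewrite inE => /orP[] zP; case/orP: split => /andP[z1P z2P];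
  by [left; apply: scZ zP z1P zZ z1Z | right; apply: scZ zP z2P zZ z2Z].
Qed.

Lemma separates_merge_pair H u v A Z z1 z2 a : scattered H Z -> separates H A Z ->
  u \in tverts H -> v \in tverts H -> z1 != z2 -> z1 \in Z -> z2 \in Z ->
  z1 \in u :|: v -> z2 \in u :|: v -> a \in A -> a \notin u :|: v.
Proof.
move=> scZ sep uH vH z12 z1Z z2Z z1w z2w aA; apply/negP; rewrite inE => /orP[] aP;
  case/orP: (scattered_merge_split scZ uH vH z12 z1Z z2Z z1w z2w) => /andP[z1P z2P];
  by [apply: sep aP z1P aA z1Z | apply: sep aP z2P aA z2Z].
Qed.

Lemma scattered_pair_of_spread H A : partition (tverts H) [set: T] -> A != set0 ->
  (forall P, P \in tverts H -> ~~ (A \subset P)) ->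
  exists s1 s2, [/\ s1 \in A, s2 \in A, s1 != s2 & scattered H [set s1; s2]].
Proof.
move=> pH /set0Pn[s1 s1A] spread.
have s1c : s1 \in cover (tverts H) by rewrite (cover_partition pH) inE.
have P1H := pblock_mem s1c.
case/subsetPn: (spread _ P1H) => s2 s2A s2P1.
have s12 : s1 != s2 by apply: contraNneq s2P1 => <-; rewrite mem_pblock.
exists s1, s2; split=> // P z1 z2 PH.
have apart : s1 \in P -> s2 \notin P.
  by move=> s1P; rewrite -(def_pblock (partition_trivIset pH) PH s1P).
move=> z1P z2P; rewrite !inE => /orP[]/eqP e1 /orP[]/eqP e2; subst z1 z2 => //.
- by rewrite (negPf (apart z1P)) in z2P.
- by rewrite (negPf (apart z2P)) in z1P.
Qed.

Lemma scattered_init (bl rd : rel T) Z : scattered (init_trigraph bl rd) Z.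
Proof. by move=> _ z1 z2 /imsetP[x _ ->]; rewrite !inE => /eqP-> /eqP->. Qed.

Lemma maxred_partial_seq d G0 H : in_partial_seq d G0 H -> maxred_le d H.
Proof. by case. Qed.

End Parts.

Section Quotient.
Variables (T : finType) (bl rd : rel T).
Hypothesis wf : wf_trigraph bl rd.
Implicit Types (H : trigraph {set T}) (P Q : {set T}).

Definition all_black P Q := [forall x in P, forall y in Q, bl x y].
Definition some_adj P Q := [exists x in P, exists y in Q, adjacent bl rd x y].

Definition quotient_trigraph H :=
  partition (tverts H) [set: T] /\
  {in tverts H &, forall P Q, P != Q ->
     tblack H P Q = all_black P Q /\ tred H P Q = ~~ all_black P Q && some_adj P Q}.

Lemma all_blackP P Q : reflect {in P & Q, forall x y, bl x y} (all_black P Q).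
Proof.
apply: (iffP forall_inP) => [Pbl x y xP yQ|Pbl x xP].
  by move/forall_inP: (Pbl x xP); apply.
by apply/forall_inP => y; apply: Pbl.
Qed.

Lemma all_black1 a b : all_black [set a] [set b] = bl a b.
Proof.
apply/forall_inP/idP => [/(_ a (set11 a))/forall_inP/(_ b (set11 b)) //|abl x].
by rewrite inE => /eqP->; apply/forall_inP => y; rewrite inE => /eqP->.
Qed.

Lemma some_adj1 a b : some_adj [set a] [set b] = adjacent bl rd a b.
Proof.
apply/exists_inP/idP => [[x]|ab]; last first.
  by exists a; rewrite ?set11 //; apply/exists_inP; exists b; rewrite ?set11.
by rewrite inE => /eqP-> /exists_inP[y]; rewrite inE => /eqP->.
Qed.

Lemma all_blackUl u v Q : all_black (u :|: v) Q = all_black u Q && all_black v Q.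
Proof.
apply/forall_inP/andP => [ubl|[/forall_inP ubl /forall_inP vbl] x].
  by split; apply/forall_inP => x xP; apply: ubl; rewrite inE xP ?orbT.
by rewrite inE => /orP[]; [apply: ubl | apply: vbl].
Qed.

Lemma all_blackUr u v P : all_black P (u :|: v) = all_black P u && all_black P v.
Proof.
apply/forall_inP/andP => [Pbl|[/forall_inP ubl /forall_inP vbl] x xP].
  by split; apply/forall_inP => x /Pbl/forall_inP xbl;
    apply/forall_inP => y yQ; apply: xbl; rewrite inE yQ ?orbT.
have /forall_inP xu := ubl x xP; have /forall_inP xv := vbl x xP.
by apply/forall_inP => y; rewrite inE => /orP[]; [apply: xu | apply: xv].
Qed.

Lemma some_adjUl u v Q : some_adj (u :|: v) Q = some_adj u Q || some_adj v Q.
Proof.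
apply/exists_inP/orP => [[x]|[]/exists_inP[x xP adj]].
- by rewrite inE => /orP[] xP adj; [left | right]; apply/exists_inP; exists x.
- by exists x; rewrite // inE xP.
- by exists x; rewrite // inE xP orbT.
Qed.

Lemma some_adjUr u v P : some_adj P (u :|: v) = some_adj P u || some_adj P v.
Proof.
apply/exists_inP/orP => [[x xP /exists_inP[y]]|
                         []/exists_inP[x xP /exists_inP[y yQ adj]]].
- by rewrite inE => /orP[] yQ adj; [left | right];
    apply/exists_inP; exists x => //; apply/exists_inP; exists y.
- by exists x => //; apply/exists_inP; exists y; rewrite // inE yQ.
- by exists x => //; apply/exists_inP; exists y; rewrite // inE yQ orbT.
Qed.

Lemma all_black_some_adj P Q :
  P != set0 -> Q != set0 -> all_black P Q -> some_adj P Q.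
Proof.
move=> /set0Pn[x xP] /set0Pn[y yQ] /forall_inP/(_ x xP)/forall_inP/(_ y yQ) xy.
by apply/exists_inP; exists x => //; apply/exists_inP; exists y; rewrite /adjacent ?xy.
Qed.

Lemma quotient_adj H P Q : quotient_trigraph H -> P \in tverts H -> Q \in tverts H ->
  P != Q -> tblack H P Q || tred H P Q = some_adj P Q.
Proof.
move=> [pH semH] PH QH PQ; have [-> ->] := semH P Q PH QH PQ.
case: (boolP (all_black P Q)) => //= Pbl.
by rewrite all_black_some_adj // (partition_neq0 pH).
Qed.

Lemma partition_set1 : partition [set [set x] | x : T] [set: T].
Proof.
apply/and3P; split.
- rewrite cover_imset; apply/eqP/setP => x; rewrite inE.
  by apply/bigcupP; exists x; rewrite ?inE.
- apply/trivIsetP => _ _ /imsetP[a _ ->] /imsetP[b _ ->] ab.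
  by rewrite disjoints1 inE; apply: contraNneq ab => ->.
- by apply/imsetP => -[x _ /setP/(_ x)]; rewrite !inE eqxx.
Qed.

Lemma quotient_init : quotient_trigraph (init_trigraph bl rd).
Proof.
split; first exact: partition_set1.
have singleE (r : rel T) a b :
    [exists x, exists y, [&& [set a] == [set x], [set b] == [set y] & r x y]] = r a b.
  apply/existsP/idP => [[x /existsP[y /and3P[/eqP/set1_inj-> /eqP/set1_inj-> //]]]|rab].
  by exists a; apply/existsP; exists b; rewrite !eqxx.
move=> _ _ /imsetP[a _ ->] /imsetP[b _ ->] _ /=.
rewrite !singleE all_black1 some_adj1 /adjacent; split=> //.
have [_ _ _ _ disj] := wf.
by move: (disj a b); case: (bl a b); case: (rd a b).
Qed.

Lemma partition_merge (D : {set T}) (Ps : {set {set T}}) u v :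
  partition Ps D -> u \in Ps -> v \in Ps -> u != v ->
  partition ((u :|: v) |: (Ps :\ u :\ v)) D.
Proof.
move=> pPs uPs vPs uv.
have vPs' : v \in Ps :\ u by rewrite !inE eq_sym uv.
have pPs' := partitionD1 (partitionD1 pPs uPs) vPs'.
have nonempty : u :|: v != set0.
  by rewrite setU_eq0 negb_and (partition_neq0 pPs uPs).
have disj : [disjoint u :|: v & D :\: u :\: v].
  rewrite -setI_eq0; apply/eqP/setP => x; rewrite !inE.
  by case: (x \in u); case: (x \in v); rewrite ?andbF.
have := partitionU1 pPs' nonempty disj.
have [/subsetP uD /subsetP vD] := (partitionS pPs uPs, partitionS pPs vPs).
congr partition; apply/setP => x; rewrite !inE.
have [xu|_] := boolP (x \in u); first by rewrite uD.
have [xv|_] := boolP (x \in v); first by rewrite vD ?orbT.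
by [].
Qed.

Lemma quotient_contract H u v : quotient_trigraph H ->
  u \in tverts H -> v \in tverts H -> u != v -> quotient_trigraph (contract H u v).
Proof.
move=> qH uH vH uv; have [pH semH] := qH.
split; first exact: partition_merge.
have old P : P \in tverts (contract H u v) -> P != u :|: v ->
    [/\ P \in tverts H, u != P & v != P].
  rewrite mem_contract => /orP[/eqP->|/and3P[Pv Pu PH]]; first by rewrite eqxx.
  by rewrite !(eq_sym _ P).
move=> a b aH bH ab; rewrite /= aH bH ab /=.
case: (eqVneq a (u :|: v)) => [aw|aw].
  have [bH0 ub vb] : [/\ b \in tverts H, u != b & v != b].
    by apply: old; rewrite // -aw eq_sym.
  rewrite !(quotient_adj qH) // (semH u b uH bH0 ub).1 (semH v b vH bH0 vb).1.
  by rewrite aw all_blackUl some_adjUl.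
have [aH0 ua va] := old a aH aw.
case: (eqVneq b (u :|: v)) => [bw|bw]; last by have [bH0 _ _] := old b bH bw; exact: semH.
rewrite eq_sym in ua; rewrite eq_sym in va.
rewrite !(quotient_adj qH) // (semH a u aH0 uH ua).1 (semH a v aH0 vH va).1.
by rewrite bw all_blackUr some_adjUr.
Qed.

Lemma quotient_in_partial_seq d H :
  in_partial_seq d (init_trigraph bl rd) H -> quotient_trigraph H.
Proof.
elim=> [_|{}H u v _ qH uH vH uv _]; [exact: quotient_init | exact: quotient_contract].
Qed.

Definition mixed P z := [exists t in P, ~~ bl t z] && [exists t in P, adjacent bl rd t z].

Lemma card_mixed_le d H w Z : quotient_trigraph H -> w \in tverts H ->
  maxred_le d H -> scattered H Z -> {in Z, forall z, z \notin w /\ mixed w z} ->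
  #|Z| <= d.
Proof.
move=> [pH semH] wH maxred scZ mixZ.
pose part := pblock (tverts H).
have partP z : part z \in tverts H /\ z \in part z.
  have zc : z \in cover (tverts H) by rewrite (cover_partition pH) inE.
  by rewrite mem_pblock pblock_mem.
rewrite -(card_in_imset (f := part)); last first.
  move=> z1 z2 z1Z z2Z eq12; have [z1H z1P] := partP z1; have [_ z2P] := partP z2.
  by apply: scZ z1H z1P _ z1Z z2Z; rewrite eq12.
apply: leq_trans (maxred w wH); apply/subset_leq_card/subsetP => _ /imsetP[z zZ ->].
have [zH zP] := partP z.
have [zw /andP[/exists_inP[t1 t1w nbl] /exists_inP[t2 t2w adj]]] := mixZ z zZ.
have wz : w != part z by apply: contraNneq zw => ->.
rewrite inE zH /= (semH _ _ wH zH wz).2; apply/andP; split.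
- by apply/negP => /all_blackP/(_ t1 z t1w zP); apply/negP.
- by apply/exists_inP; exists t2 => //; apply/exists_inP; exists z.
Qed.

End Quotient.

Section Fence.
Variables (T : finType) (bl rd : rel T) (f : 'I_6 + 'I_6 -> T) (S X : {set T}).
Hypotheses (wf : wf_trigraph bl rd) (fenceP : contains_fence bl rd f)
  (attS : attached bl rd f S) (ruleX : attachment_rule bl rd f S X).
Local Notation F := (fenceV f).
Local Notation adj := (adjacent bl rd).
Local Notation mixed := (mixed bl rd).
Local Notation quotient := (quotient_trigraph bl rd).
Implicit Types (H : trigraph {set T}) (w : {set T}).

Lemma fence_inj : injective f. Proof. by case: fenceP. Qed.

Lemma bl_fence p q : bl (f p) (f q) = fence_black p q.
Proof. by case: (fenceP.2 p q). Qed.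

Lemma adj_fence p q : adj (f p) (f q) = fence_adj p q.
Proof. by case: (fenceP.2 p q) => blE rdE; rewrite /adjacent blE rdE. Qed.

Lemma mem_fence r : f r \in F. Proof. exact: imset_f. Qed.

Lemma fence_notin_S r : f r \notin S.
Proof. by case: attS => _ disj _ _; rewrite (disjointFl disj (mem_fence r)). Qed.

Lemma X_notin_fence_S x : x \in X -> x \notin F :|: S.
Proof. by case: ruleX => _ disj _ _ _ xX; rewrite (disjointFr disj xX). Qed.

Lemma XS_notin_fence x : x \in X :|: S -> x \notin F.
Proof.
case/setUP => [/X_notin_fence_S|sS]; first by rewrite inE negb_or => /andP[].
by case: attS => _ disj _ _; rewrite (disjointFr disj sS).
Qed.

Lemma blC x y : bl x y = bl y x.
Proof. by case: wf => blC _ _ _ _; apply: blC. Qed.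

Lemma adjC x y : adj x y = adj y x.
Proof. by case: wf => blC rdC _ _ _; rewrite /adjacent blC rdC. Qed.

Lemma nadj_nbl x y : ~~ adj x y -> ~~ bl x y.
Proof. by rewrite /adjacent negb_or => /andP[]. Qed.

Lemma adj_A_S i s : s \in S -> adj s (f (inl i)).
Proof.
by case: attS => _ _ Abl _ sS; rewrite adjC /adjacent Abl ?imset_f.
Qed.

Lemma nbl_S_B i s : s \in S -> ~~ bl s (f (inr i)).
Proof.
by case: attS => _ _ _ Bnadj sS; apply: nadj_nbl; rewrite adjC Bnadj ?imset_f.
Qed.

Lemma adj_A_out i z : z \notin F -> adj z (f (inl i)) = (z \in X :|: S).
Proof.
case: ruleX => _ _ Aout _ _ zF; rewrite adjC.
by case: (Aout (f (inl i)) z); rewrite ?imset_f.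
Qed.

Lemma adj_B_out i z : z \notin F -> adj z (f (inr i)) = (z \in X).
Proof.
case: ruleX => _ _ _ Bout _ zF; rewrite adjC.
by case: (Bout (f (inr i)) z); rewrite ?imset_f.
Qed.

Lemma mixed_pair w p q r : f p \in w -> f q \in w -> mixed_to_pair p q r -> mixed w (f r).
Proof.
move=> pw qw /and4P[_ _ nbl ad]; apply/andP; split; apply/exists_inP.
- by case/orP: nbl => nbl; [exists (f p) | exists (f q)]; rewrite ?bl_fence.
- by case/orP: ad => ad; [exists (f p) | exists (f q)]; rewrite ?adj_fence.
Qed.

Lemma mixed_S_across w i j s : f (inl i) \in w -> f (inr j) \in w -> s \in S -> mixed w s.
Proof.
move=> Aw Bw sS; apply/andP; split; apply/exists_inP.
- by exists (f (inr j)); rewrite // blC nbl_S_B.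
- by exists (f (inl i)); rewrite // adjC adj_A_S.
Qed.

Lemma mixed_fence_S w r0 r s : f r0 \in w -> s \in w -> s \in S ->
  mixed_to_S r0 r -> mixed w (f r).
Proof.
move=> r0w sw sS /and3P[_ nbl ad]; apply/andP; split; apply/exists_inP.
- have [r0r|r0r] := boolP (fence_black r0 r); last by exists (f r0); rewrite ?bl_fence.
  rewrite r0r /= in nbl; case: r {r0r ad} nbl => // i _.
  by exists s; rewrite ?nbl_S_B.
- have [r0r|r0r] := boolP (fence_adj r0 r); first by exists (f r0); rewrite ?adj_fence.
  rewrite (negPf r0r) /= in ad; case: r {r0r nbl} ad => // i _.
  by exists s; rewrite ?adj_A_S.
Qed.

Lemma mixed_A w i x y : x \in w -> y \in w -> x \in X :|: S ->
  y \notin F -> y \notin X :|: S -> mixed w (f (inl i)).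
Proof.
move=> xw yw xXS yF yXS; apply/andP; split; apply/exists_inP.
- by exists y; rewrite // nadj_nbl // adj_A_out.
- by exists x; rewrite // adj_A_out // XS_notin_fence.
Qed.

Lemma mixed_B w i x y : x \in w -> y \in w -> x \in X ->
  y \notin F -> y \notin X -> mixed w (f (inr i)).
Proof.
move=> xw yw xX yF yX; apply/andP; split; apply/exists_inP.
- by exists y; rewrite // nadj_nbl // adj_B_out.
- by exists x; rewrite // adj_B_out // XS_notin_fence // inE xX.
Qed.

Lemma card_fence_in_part_le1 H P : scattered H F -> P \in tverts H ->
  #|[set r | f r \in P]| <= 1.
Proof.
move=> scF PH; apply/card_le1_eqP => p q; rewrite !inE => pP qP.
exact: fence_inj (scF _ _ _ PH qP pP (mem_fence q) (mem_fence p)).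
Qed.

Lemma card_fence_mixed_le H w (R : {set 'I_6 + 'I_6}) :
  quotient H -> w \in tverts H -> maxred_le 4 H -> scattered H F ->
  (forall r, r \in R -> f r \notin w /\ mixed w (f r)) -> #|R| <= 4.
Proof.
move=> qH wH maxred scF mixR; rewrite -(card_imset _ fence_inj).
apply: card_mixed_le qH wH maxred _ _.
  by apply: scatteredS scF; apply/subsetP => _ /imsetP[r _ ->]; exact: mem_fence.
by move=> _ /imsetP[r rR ->]; exact: mixR.
Qed.

Lemma fence_side_not_mixed H w b :
  quotient H -> w \in tverts H -> maxred_le 4 H -> scattered H F ->
  ~ (forall r, inA r = b -> mixed w (f r)).
Proof.
move=> qH wH maxred scF mixb.
pose R := [set r | (inA r == b) && (f r \notin w)].
have R4 : #|R| <= 4.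
  by apply: card_fence_mixed_le qH wH maxred scF _ => r; rewrite inE => /andP[/eqP/mixb].
have w1 := card_fence_in_part_le1 scF wH.
have : 6 <= #|R| + #|[set r | f r \in w]|.
  apply: leq_trans (eq_leq (esym (card_fence_side b))) (leq_trans _ (leq_card_setU _ _)).
  by apply/subset_leq_card/subsetP => r; rewrite !inE; case: (f r \in w) => ->.
by move=> /leq_trans/(_ (leq_add R4 w1)).
Qed.

Lemma separates_S H : quotient H -> maxred_le 4 H -> scattered H F ->
  separates H S (~: S).
Proof.
move=> qH maxred scF P s t PH sP tP sS; rewrite inE => tS.
have sXS : s \in X :|: S by rewrite inE sS orbT.
case: (boolP (t \in F)) => [/imsetP[r0 _ tE]|tF].
  have r0P : f r0 \in P by rewrite -tE.
  have : #|[set r | mixed_to_S r0 r]| <= 4.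
    apply: (card_fence_mixed_le qH PH maxred scF) => r; rewrite inE => mix.
    split; last exact: mixed_fence_S r0P sP sS mix.
    apply/negP => rP; case/and3P: mix => /eqP[].
    exact: fence_inj (scF _ _ _ PH rP r0P (mem_fence r) (mem_fence r0)).
  by rewrite leqNgt card_mixed_to_S.
case: (boolP (t \in X)) => tX.
  apply: (fence_side_not_mixed qH PH maxred scF (b := false)) => -[//|i] _.
  apply: mixed_B tP sP tX (XS_notin_fence sXS) _.
  by apply/negP => /X_notin_fence_S; rewrite inE sS orbT.
apply: (fence_side_not_mixed qH PH maxred scF (b := true)) => -[i|//] _.
by apply: mixed_A sP tP sXS tF _; rewrite inE negb_or tX.
Qed.

Lemma separates_XY H : quotient H -> maxred_le 4 H -> scattered H F ->
  separates H X (~: (F :|: S :|: X)).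
Proof.
move=> qH maxred scF P x y PH xP yP xX; rewrite !inE !negb_or => /andP[/andP[yF yS] yX].
apply: (fence_side_not_mixed qH PH maxred scF (b := true)) => -[i|//] _.
by apply: mixed_A xP yP _ yF _; rewrite inE ?xX // negb_or yX.
Qed.

Definition S_pair_witnesses p q s1 s2 : {set T} :=
  if inA p != inA q then [set s1; s2] else set0.

Definition pair_witnesses p q s1 s2 :=
  f @: [set r | mixed_to_pair p q r] :|: S_pair_witnesses p q s1 s2.

Lemma S_pair_witnesses_sub p q s1 s2 :
  s1 \in S -> s2 \in S -> S_pair_witnesses p q s1 s2 \subset S.
Proof.
move=> s1S s2S; rewrite /S_pair_witnesses.
by case: ifP; rewrite ?sub0set // subUset !sub1set s1S s2S.
Qed.

Lemma card_pair_witnesses p q s1 s2 : p != q -> s1 \in S -> s2 \in S -> s1 != s2 ->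
  5 <= #|pair_witnesses p q s1 s2|.
Proof.
move=> pq s1S s2S s12; have /subsetP S12S := S_pair_witnesses_sub p q s1S s2S.
have disj : f @: [set r | mixed_to_pair p q r] :&: S_pair_witnesses p q s1 s2 = set0.
  apply/setP => z; rewrite !inE; apply/negP => /andP[/imsetP[r _ ->] /S12S].
  by rewrite (negPf (fence_notin_S r)).
rewrite cardsU disj cards0 subn0 card_imset; last exact: fence_inj.
have -> : #|S_pair_witnesses p q s1 s2| = (inA p != inA q).*2.
  by rewrite /S_pair_witnesses; case: ifP => _; rewrite ?cards2 ?s12 ?cards0.
exact: card_mixed_to_pair.
Qed.

Lemma pair_witnesses_mixed w p q s1 s2 : f p \in w -> f q \in w ->
  s1 \in S -> s2 \in S -> (forall r, f r \in w -> r = p \/ r = q) ->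
  (forall s, s \in S -> s \notin w) ->
  {in pair_witnesses p q s1 s2, forall z, z \notin w /\ mixed w z}.
Proof.
move=> pw qw s1S s2S only_pq S_out z; rewrite inE => /orP[/imsetP[r]|].
  rewrite inE => mix ->; split; last exact: mixed_pair pw qw mix.
  case/and4P: mix => rp rq _ _; apply/negP => /only_pq[]/eqP.
    by rewrite (negPf rp).
  by rewrite (negPf rq).
move=> zS12; have zS := subsetP (S_pair_witnesses_sub p q s1S s2S) z zS12.
split; first exact: S_out.
move: zS12; rewrite /S_pair_witnesses; case: ifP => [sides _|_]; last by rewrite inE.
move: (p) (q) pw qw sides => [i|i] [j|j] //= iw jw _.
  exact: mixed_S_across iw jw zS.
exact: mixed_S_across jw iw zS.
Qed.

Lemma fence_scattered_contract H u v :
  quotient H -> scattered H F -> separates H S (~: S) ->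
  u \in tverts H -> v \in tverts H -> u != v ->
  maxred_le 4 (contract H u v) ->
  (forall P, P \in tverts (contract H u v) -> ~~ (S \subset P)) ->
  scattered (contract H u v) F.
Proof.
move=> qH scF sepS uH vH uv maxred spread.
have qH' := quotient_contract qH uH vH uv.
have wH : u :|: v \in tverts (contract H u v) by rewrite mem_contract eqxx.
have subF (R : {set 'I_6 + 'I_6}) : f @: R \subset F.
  by apply/subsetP => _ /imsetP[r _ ->]; exact: mem_fence.
have sepSF : separates H S F.
  apply: separatesS sepS => //; apply/subsetP => _ /imsetP[r _ ->].
  by rewrite inE fence_notin_S.
apply: (scattered_contract scF) => z1 z2 pw qw /imsetP[p _ z1E] /imsetP[q _ z2E].
subst z1 z2; congr f; apply: contraTeq isT => pq.
have fpq : f p != f q by rewrite (inj_eq fence_inj).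
have only_pq r : f r \in u :|: v -> r = p \/ r = q.
  move=> rw; have := scattered_merge_pair scF uH vH fpq (mem_fence p) (mem_fence q)
    (mem_fence r) pw qw rw.
  by case=> /fence_inj; [left | right].
have S_out s : s \in S -> s \notin u :|: v.
  exact: separates_merge_pair scF sepSF uH vH fpq (mem_fence p) (mem_fence q) pw qw.
have S0 : S != set0 by case: attS.
have [s1 [s2 [s1S s2S s12 scS12]]] := scattered_pair_of_spread qH'.1 S0 spread.
have mixZ := pair_witnesses_mixed pw qw s1S s2S only_pq S_out.
have Zw z : z \in pair_witnesses p q s1 s2 -> z \notin u :|: v.
  by move=> /mixZ[].
suff : #|pair_witnesses p q s1 s2| <= 4.
  by rewrite leqNgt (card_pair_witnesses pq s1S s2S s12).
apply: card_mixed_le qH' wH maxred _ mixZ.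
apply: scatteredU.
- apply: (scattered_contract (scatteredS (subF _) scF)) => z1 z2 z1w _ z1Z.
  by rewrite (negPf (Zw z1 _)) // inE z1Z in z1w.
- by rewrite /S_pair_witnesses; case: ifP => _; [exact: scS12 | exact: scattered_set0].
- apply: separates_contract => [|x y xw _ xZ _].
    exact: separatesS (subF _) (S_pair_witnesses_sub p q s1S s2S) (separates_sym sepSF).
  by rewrite (negPf (Zw x _)) // inE xZ in xw.
Qed.

Lemma fence_scattered G : in_partial_seq 4 (init_trigraph bl rd) G ->
  (forall P, P \in tverts G -> ~~ (S \subset P)) -> scattered G F.
Proof.
elim=> [_ _|H u v seqH IH uH vH uv maxred spread]; first exact: scattered_init.
have qH := quotient_in_partial_seq wf seqH.
have scF : scattered H F.
  apply: IH => P PH; have [Q QH PQ] := contract_refines u v PH.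
  by apply: contraNN (spread Q QH) => /subset_trans; apply.
have sepS := separates_S qH (maxred_partial_seq seqH) scF.
exact: fence_scattered_contract qH scF sepS uH vH uv maxred spread.
Qed.

End Fence.

Theorem lemma4p9 (T : finType) (bl rd : rel T) (f : 'I_6 + 'I_6 -> T)
    (S X : {set T}) (G' : trigraph {set T}) :
  wf_trigraph bl rd ->
  contains_fence bl rd f ->
  attached bl rd f S ->
  attachment_rule bl rd f S X ->
  let Y := ~: (fenceV f :|: S :|: X) in
  in_partial_seq 4 (init_trigraph bl rd) G' ->
  (forall P, P \in tverts G' -> ~~ (S \subset P)) ->
  (forall P, P \in tverts G' -> ~~ ((P :&: S != set0) && (P :\: S != set0))) /\
  (forall P, P \in tverts G' -> ~~ ((P :&: X != set0) && (P :&: Y != set0))).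
Proof.
move=> wf fenceP attS ruleX Y seqG' spread.
have qG' := quotient_in_partial_seq wf seqG'.
have maxred := maxred_partial_seq seqG'.
have scF := fence_scattered wf fenceP attS ruleX seqG' spread.
split=> P PH; apply/negP.
  case/andP=> /set0Pn[s /setIP[sP sS]] /set0Pn[t /setDP[tP tS]].
  by apply: (separates_S wf fenceP attS ruleX qG' maxred scF PH sP tP sS); rewrite inE.
case/andP=> /set0Pn[x /setIP[xP xX]] /set0Pn[y /setIP[yP yY]].
exact: (separates_XY wf fenceP attS ruleX qG' maxred scF PH xP yP xX yY).
Qed.
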